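(* Let $\mathbf{V}\in\mathbb{R}^{n\times(k+1)}$ have full column rank and let $e_1>0$ be the smallest eigenvalue of $\mathbf{V}^\top\mathbf{V}$. Suppose $\mathbf{W}\in\mathbb{R}^{k\times(k+1)}$ satisfies $$\max_{i\in[n]}\Big\{\min_{l\in[k]}\|\mathbf{V}_{i,:}-\mathbf{W}_{l,:}\|\Big\}=\epsilon.$$ Then $\epsilon\ge\sqrt{e_1}\,(3n(k+1)^2)^{-1}$.
   Context: $[n]=\{1,\dots,n\}$; $\|\cdot\|$ is the Euclidean norm; $\mathbf{V}_{i,:}$ denotes the $i$-th row of $\mathbf{V}$. *)

From HB Require Import structures.
From mathcomp Require Import all_boot all_order all_algebra.
From mathcomp Require Import all_reals.
Set Implicit Arguments. Unset Strict Implicit. Unset Printing Implicit Defensive.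
Import Order.TTheory GRing.Theory Num.Theory.
Local Open Scope ring_scope.

Definition enorm (R : realType) (m : nat) (v : 'rV[R]_m) : R :=
  Num.sqrt (\sum_(j < m) v 0 j ^+ 2).

(* Minimum / maximum of a (nonempty) finite family of reals indexed by 'I_m.
   (For m = 0 these default to 0; they are only used with m > 0.) *)
Definition fmin (R : realType) (m : nat) (f : 'I_m -> R) : R :=
  let s := [seq f l | l : 'I_m] in \big[Num.min/head 0 s]_(x <- s) x.
Definition fmax (R : realType) (m : nat) (f : 'I_m -> R) : R :=
  let s := [seq f l | l : 'I_m] in \big[Num.max/head 0 s]_(x <- s) x.

Definition maxmin_dist (R : realType) (n k d : nat)
    (V : 'M[R]_(n, d)) (W : 'M[R]_(k, d)) : R :=
  fmax (fun i : 'I_n => fmin (fun l : 'I_k => enorm (row i V - row l W))).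

(* Send each row V_i to a nearest row of W; the resulting matrix U has its
   rows among those of W, so rank U <= k < k + 1 and U x = 0 for some nonzero
   x.  Then V x = (V - U) x, and each entry of (V - U) x is at most eps |x| by
   Cauchy-Schwarz, so the Rayleigh bound gives
   e1 |x|^2 <= |V x|^2 <= n eps^2 |x|^2, i.e. sqrt e1 <= sqrt n eps, which is
   stronger than the claim. *)

From HB Require Import structures.
From mathcomp Require Import all_boot all_order all_algebra.
From mathcomp Require Import all_reals complex.
From mathcomp Require Import ring.
Set Implicit Arguments. Unset Strict Implicit. Unset Printing Implicit Defensive.
Import Order.TTheory GRing.Theory Num.Theory.
Local Open Scope ring_scope.

Section NormalQuadraticForm.
Variable C : numClosedFieldType.
Local Open Scope sesquilinear_scope.

Lemma quadform_conj n (A : 'M[C]_n) (v : 'rV_n) :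
  ((v *m A *m v ^t*) 0 0)^* = (v *m A ^t* *m v ^t*) 0 0.
Proof.
have -> : ((v *m A *m v ^t*) 0 0)^* = ((v *m A *m v ^t*) ^t*) 0 0 by rewrite !mxE.
by rewrite !trmx_mul !map_mxM trmxCK mulmxA.
Qed.

Lemma hermitian_eigenvalue_real n (A : 'M[C]_n) a :
  A \is hermsymmx -> eigenvalue A a -> a \is Num.real.
Proof.
move=> /is_hermitianmxP; rewrite expr0 scale1r => A_herm /eigenvalueP [v vA v_neq0].
have vv_neq0 : (v *m v ^t*) 0 0 != 0 by rewrite -dotmxE dnorm_eq0.
have vv_real : ((v *m v ^t*) 0 0)^* = (v *m v ^t*) 0 0.
  by have := quadform_conj 1%:M v; rewrite trmx1 map_mx1 !mulmx1.
have := quadform_conj A v; rewrite -A_herm vA -!scalemxAl.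
rewrite [X in X^* = _]mxE [X in _ = X]mxE rmorphM /= vv_real.
by move/(mulIf vv_neq0)/CrealP.
Qed.

Lemma eigenvalue_spectral_diag n (A : 'M[C]_n) j :
  A \is normalmx -> eigenvalue A (spectral_diag A 0 j).
Proof.
move=> /orthomx_spectralP A_eq; set P := spectralmx A in A_eq *.
have Pu : P \is unitarymx := spectral_unitarymx A.
apply/eigenvalueP; exists (row j P).
  have PA : P *m A = diag_mx (spectral_diag A) *m P.
    by rewrite [in LHS]A_eq !mulmxA mulmxV ?mul1mx // spectral_unit.
  by rewrite -row_mul PA row_mul row_diag_mx -scalemxAl -rowE.
apply/eqP => Pj0; move/row_unitarymxP: Pu => /(_ j j).
by rewrite Pj0 dotmxE mul0mx mxE eqxx => /eqP; rewrite eq_sym oner_eq0.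
Qed.

Lemma normal_quadform_ge n (A : 'M[C]_n) e (z : 'rV_n) :
  A \is normalmx -> (forall a, eigenvalue A a -> e <= a) ->
  e * (z *m z ^t*) 0 0 <= (z *m A *m z ^t*) 0 0.
Proof.
move=> A_normal A_ge; have /orthomx_spectralP A_eq := A_normal.
set P := spectralmx A in A_eq; set d := spectral_diag A in A_eq.
have iP : invmx P = P ^t* := invmx_unitary (spectral_unitarymx A).
set y := z *m P ^t*.
have yt : y ^t* = P *m z ^t* by rewrite /y trmx_mul map_mxM trmxCK.
have -> : z *m z ^t* = y *m y ^t*.
  by rewrite yt mulmxA /y -(mulmxA z) -iP mulVmx ?spectral_unit // mulmx1.
have -> : z *m A *m z ^t* = y *m diag_mx d *m y ^t*.
  by rewrite yt {1}A_eq iP /y !mulmxA.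
clearbody y; rewrite mul_mx_diag !mxE mulr_sumr; apply: ler_sum => j _; rewrite !mxE.
rewrite mulrAC [in X in _ <= X]mulrC; apply: ler_wpM2r; first exact: mul_conjC_ge0.
exact/A_ge/eigenvalue_spectral_diag.
Qed.
End NormalQuadraticForm.

Section SymmetricQuadraticForm.
Variable R : rcfType.
Local Open Scope sesquilinear_scope.

(* The spectral theorem is only available for normal matrices over an
   algebraically closed field, so M is viewed as a Hermitian complex matrix. *)
Lemma symmetric_quadform_ge n (M : 'M[R]_n) e (x : 'rV_n) :
  M^T = M -> (forall a, eigenvalue M a -> e <= a) ->
  e * (x *m x^T) 0 0 <= (x *m M *m x^T) 0 0.
Proof.
move=> M_sym M_ge; pose f := real_complex R.
have f_real r : f r \is Num.real by apply/complex_realP; exists r.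
have map_trC p q (y : 'M[R]_(p, q)) : (map_mx f y) ^t* = map_mx f y^T.
  by apply/matrixP => i j; rewrite !mxE conj_Creal.
have A_herm : map_mx f M \is hermsymmx.
  by apply/is_hermitianmxP; rewrite expr0 scale1r map_trC M_sym.
have map_entry p q (y : 'M[R]_(p, q)) i j : f (y i j) = map_mx f y i j.
  by rewrite mxE.
rewrite -lecR rmorphM /= -/f !map_entry !map_mxM -!map_trC.
apply: normal_quadform_ge; first exact: hermitian_normalmx.
move=> a /[dup] /(hermitian_eigenvalue_real A_herm) /complex_realP [r ->].
by rewrite eigenvalue_map lecR; apply: M_ge.
Qed.
End SymmetricQuadraticForm.

Lemma sqr_sum_mul_le (R : realDomainType) m (a b : 'I_m -> R) :
  (\sum_j a j * b j) ^+ 2 <= (\sum_j a j ^+ 2) * (\sum_j b j ^+ 2).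
Proof.
set A := \sum_j a j ^+ 2; set B := \sum_j b j ^+ 2; set S := \sum_j a j * b j.
have [B0|B_gt0] := eqVneq B 0.
  have b0 j : b j = 0.
    move/eqP: B0; rewrite psumr_eq0 => [/allP/(_ j (mem_index_enum _))|i _].
      by rewrite sqrf_eq0 => /eqP.
    exact: sqr_ge0.
  rewrite /S big1 => [|j _]; last by rewrite b0 mulr0.
  by rewrite B0 mulr0 expr0n.
have : 0 <= \sum_j (B * a j - S * b j) ^+ 2 by apply: sumr_ge0 => j _; exact: sqr_ge0.
have -> : \sum_j (B * a j - S * b j) ^+ 2 = B * (A * B - S ^+ 2).
  rewrite (eq_bigr (fun j => B ^+ 2 * a j ^+ 2 - 2 * B * S * (a j * b j) + S ^+ 2 * b j ^+ 2));
    last by move=> j _; ring.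
  rewrite big_split sumrB /= -!mulr_sumr -/A -/B -/S; ring.
by rewrite pmulr_rge0 ?subr_ge0 // lt_def B_gt0 sumr_ge0 // => j _; exact: sqr_ge0.
Qed.

Lemma mxrank_lt_kernel_vector (F : fieldType) m d (U : 'M[F]_(m, d)) :
  (\rank U < d)%N -> exists2 x : 'rV_d, x != 0 & U *m x^T = 0.
Proof.
move=> rkU; have : kermx U^T != 0.
  by rewrite -mxrank_eq0 mxrank_ker mxrank_tr subn_eq0 -ltnNge.
case/rowV0Pn => x /sub_kermxP xU x_neq0; exists x => //.
by rewrite -(trmxK U) -trmx_mul xU trmx0.
Qed.

Section LowRankApproximation.
Variable R : realType.

Lemma enorm_ge0 m (v : 'rV[R]_m) : 0 <= enorm v.
Proof. exact: sqrtr_ge0. Qed.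

Lemma enorm_sqr m (v : 'rV[R]_m) : enorm v ^+ 2 = \sum_j v 0 j ^+ 2.
Proof. by rewrite sqr_sqrtr // sumr_ge0 // => j _; exact: sqr_ge0. Qed.

Lemma fmax_ge m (f : 'I_m -> R) i : f i <= fmax f.
Proof. by rewrite /fmax /=; apply: le_bigmax_seq => //; exact: image_f. Qed.

Lemma fmin_attained m (f : 'I_m -> R) : (0 < m)%N -> exists l, fmin f = f l.
Proof.
move=> m_gt0; rewrite /fmin /=; set s := [seq f l | l : 'I_m]; rewrite big_seq.
apply: (big_ind (fun x => exists l, x = f l)) => [|a b [la ->] [lb ->]|a /imageP [l _ ->]].
- have /imageP [l _ ->] : head 0 s \in s.
    by rewrite -nth0 mem_nth // size_image card_ord.
  by exists l.
- by rewrite /Num.min; case: ifP => _; [exists la | exists lb].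
- by exists l.
Qed.

Lemma low_rank_residual_eigen_bound n d (V U : 'M[R]_(n, d)) e c :
  (\rank U < d)%N -> (forall a, eigenvalue (V^T *m V) a -> e <= a) ->
  (forall i, enorm (row i (V - U)) <= c) -> e <= n%:R * c ^+ 2.
Proof.
move=> rkU e_le res_le; set E := V - U.
have [x x_neq0 Ux] := mxrank_lt_kernel_vector rkU.
set X := \sum_j x 0 j ^+ 2.
have X_gt0 : 0 < X.
  have x_sqr_ge0 j : 0 <= x 0 j ^+ 2 by exact: sqr_ge0.
  rewrite lt_def sumr_ge0 // andbT; apply: contra x_neq0.
  rewrite psumr_eq0 // => /allP x0; apply/eqP/rowP => j; rewrite mxE.
  by apply/eqP; rewrite -sqrf_eq0; exact: x0 (mem_index_enum _).
have xx : (x *m x^T) 0 0 = X by rewrite mxE; apply: eq_bigr => j _; rewrite mxE expr2.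
have Vx : V *m x^T = E *m x^T by rewrite mulmxBl Ux subr0.
have quad : (x *m (V^T *m V) *m x^T) 0 0 = \sum_i (E *m x^T) i 0 ^+ 2.
  have -> : x *m (V^T *m V) *m x^T = (V *m x^T)^T *m (V *m x^T).
    by rewrite trmx_mul trmxK !mulmxA.
  by rewrite Vx mxE; apply: eq_bigr => i _; rewrite mxE expr2.
have Ex_le i : (E *m x^T) i 0 ^+ 2 <= c ^+ 2 * X.
  have -> : (E *m x^T) i 0 = \sum_j (row i E) 0 j * x 0 j.
    by rewrite mxE; apply: eq_bigr => j _; rewrite !mxE.
  apply: le_trans (sqr_sum_mul_le _ _) _; rewrite -enorm_sqr.
  apply: ler_wpM2r; first exact: ltW.
  have c_ge0 := le_trans (enorm_ge0 _) (res_le i).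
  by rewrite ler_sqr ?nnegrE ?enorm_ge0.
have VtV_sym : (V^T *m V)^T = V^T *m V by rewrite trmx_mul trmxK.
rewrite -(ler_pM2r X_gt0); have := symmetric_quadform_ge x VtV_sym e_le.
rewrite xx quad => /le_trans; apply; apply: le_trans (ler_sum _ (fun i _ => Ex_le i)) _.
by rewrite sumr_const card_ord -[_ *+ n]mulr_natl mulrA.
Qed.

Lemma nearest_rows_approx n k d (V : 'M[R]_(n, d)) (W : 'M[R]_(k, d)) :
  (0 < k)%N ->
  exists2 U : 'M_(n, d), (U <= W)%MS & forall i, enorm (row i (V - U)) <= maxmin_dist V W.
Proof.
move=> k_gt0.
have near i : exists l, enorm (row i V - row l W) <= maxmin_dist V W.
  have [l lE] := fmin_attained (fun l => enorm (row i V - row l W)) k_gt0.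
  by exists l; rewrite -lE; exact: (fmax_ge (fun i => fmin _) i).
exists (\matrix_i row (xchoose (near i)) W).
  by apply/row_subP => i; rewrite rowK row_sub.
by move=> i; rewrite linearB /= rowK; exact: xchooseP (near i).
Qed.

End LowRankApproximation.

Theorem corollary8 (R : realType) (n k : nat) (V : 'M[R]_(n, k.+1))
    (W : 'M[R]_(k, k.+1)) (e1 eps : R) :
  (0 < k)%N ->
  \rank V = k.+1 ->
  eigenvalue (V^T *m V) e1 ->
  (forall a, eigenvalue (V^T *m V) a -> e1 <= a) ->
  0 < e1 ->
  maxmin_dist V W = eps ->
  Num.sqrt e1 / (3 * n * k.+1 ^ 2)%:R <= eps.
Proof.
move=> k_gt0 rkV _ e1_le _ eps_def.
have n_gt0 : (0 < n)%N by rewrite (leq_trans _ (rank_leq_row V)) // rkV.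
have [U UW] := nearest_rows_approx V W k_gt0; rewrite eps_def => U_near.
have rkU : (\rank U < k.+1)%N by rewrite ltnS (leq_trans (mxrankS UW)) ?rank_leq_row.
have e1_le_n_eps2 := low_rank_residual_eigen_bound rkU e1_le U_near.
have eps_ge0 : 0 <= eps := le_trans (enorm_ge0 _) (U_near (Ordinal n_gt0)).
rewrite ler_pdivrMr ?ltr0n ?muln_gt0 ?n_gt0 ?expn_gt0 //.
apply: (@le_trans _ _ (n%:R * eps)).
  rewrite -(ger0_norm (mulr_ge0 (ler0n _ n) eps_ge0)) -sqrtr_sqr ler_sqrt ?sqr_ge0 //.
  apply: le_trans e1_le_n_eps2 _; rewrite exprMn ler_wpM2r ?sqr_ge0 // expr2.
  by rewrite ler_peMl // ler1n.
by rewrite mulrC ler_wpM2l // ler_nat mulnAC leq_pmull // muln_gt0 expn_gt0.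
Qed.
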